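(* Let $t$ be a vertex of $P(G,g_0)$. If the operation $\mu_{h,f}$ (for some $h,f\in G_t$) is applicable to $t$, then $\mu_{h,f}(t)$ is a vertex of $P(G,g_0)$ adjacent to $t$. Likewise, if the operation $\mu_h$ (for some $h\in G_t$) is applicable to $t$, then $\mu_h(t)$ is a vertex of $P(G,g_0)$ adjacent to $t$.
   Context: Let $G$ be a finite abelian group of order $D$ with zero element $0$, and let $G^+=G\setminus\{0\}$. For $g_0\in G$, let $T(G,g_0)$ be the set of vectors $t=(t(g))_{g\in G^+}\in\mathbb{Z}_{\ge 0}^{G^+}$ with $\sum_{g\in G^+}t(g)g=g_0$ (sum computed in $G$), where the zero vector is excluded when $g_0=0$. The master corner polyhedron is $P(G,g_0)=\mathrm{conv}\,T(G,g_0)\subset\mathbb{R}^{G^+}$. For $t\in T(G,g_0)$ put $G_t=\{g\in G^+ : t(g)>0\}$. Two vertices are adjacent if the segment joining them is an edge (one-dimensional face) of $P(G,g_0)$. $\mu$-operations: For $t\in T(G,g_0)$ and distinct $h,f\in G_t$ with $t(h)\le t(f)$ and $h+f\neq 0$, the operation $\mu_{h,f}$ is said to be applicable to $t$, and $s=\mu_{h,f}(t)$ is defined by $s(h)=0$, $s(f)=t(f)-t(h)$, $s(h+f)=t(h+f)+t(h)$, and $s(g)=t(g)$ for all other $g\in G^+$. For $t\in T(G,g_0)$ and $h\in G_t$ with $t(h)>1$ and $t(h)h\neq 0$, the operation $\mu_h$ is applicable to $t$, and $s=\mu_h(t)$ is defined by $s(h)=0$, $s(t(h)h)=t(t(h)h)+1$,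 and $s(g)=t(g)$ for all other $g\in G^+$. *)

From HB Require Import structures.
From mathcomp Require Import all_boot all_order all_algebra.
Set Implicit Arguments. Unset Strict Implicit. Unset Printing Implicit Defensive.
Import Order.TTheory GRing.Theory Num.Theory.
Local Open Scope ring_scope.

Section Corner.
Variable G : finZmodType.

Definition Gp : finType := {g : G | g != 0}.

Definition ivec := {ffun Gp -> nat}.

Definition inT (g0 : G) (t : ivec) : bool :=
  (\sum_(g : Gp) (val g) *+ t g == g0) &&
  ((g0 == 0) ==> [exists g, t g != 0%N]).

Definition supp (t : ivec) (g : Gp) : bool := (0 < t g)%N.

(* mu_{h,f}(t): s = t - t(h) e_h - t(h) e_f + t(h) e_{h+f} *)
Definition mu2 (t : ivec) (h f : Gp) : ivec :=
  [ffun g => addn (if g == h then 0%N else if g == f then (t f - t h)%N else t g)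
                   (if val g == val h + val f then t h else 0%N)].

Definition mu2_applicable (t : ivec) (h f : Gp) : bool :=
  [&& supp t h, supp t f, h != f, (t h <= t f)%N & val h + val f != 0].

(* mu_h(t): s = t - t(h) e_h + e_{t(h) h} *)
Definition mu1 (t : ivec) (h : Gp) : ivec :=
  [ffun g => addn (if g == h then 0%N else t g)
                   (if val g == val h *+ t h then 1%N else 0%N)].

Definition mu1_applicable (t : ivec) (h : Gp) : bool :=
  [&& supp t h, (1 < t h)%N & val h *+ t h != 0].

Variable R : realFieldType.

Definition emb (t : ivec) : Gp -> R := fun g => (t g)%:R.

Definition inP (g0 : G) (x : Gp -> R) : Prop :=
  exists s : seq (ivec * R),
    [/\ all (fun p => inT g0 p.1) s,
        all (fun p => 0 <= p.2) s,
        \sum_(p <- s) p.2 = 1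
      & forall g, x g = \sum_(p <- s) p.2 * (p.1 g)%:R].

Definition dot (c x : Gp -> R) : R := \sum_(g : Gp) c g * x g.

Definition on_face (g0 : G) (c x : Gp -> R) : Prop :=
  inP g0 x /\ forall y, inP g0 y -> dot c y <= dot c x.

Definition is_vertex (g0 : G) (v : Gp -> R) : Prop :=
  exists c : Gp -> R, forall x, on_face g0 c x <-> (forall g, x g = v g).

Definition adjacent (g0 : G) (v w : Gp -> R) : Prop :=
  (exists g, v g != w g) /\
  exists c : Gp -> R, forall x, on_face g0 c x <->
    exists lam : R, [/\ 0 <= lam, lam <= 1 &
                        forall g, x g = lam * v g + (1 - lam) * w g].

End Corner.

(* Both operations are instances of one exchange move.  Fix q in G^+ and a
   nonnegative vector w with w(q) = 0 whose weight sum_g w(g) g equals q; the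
   vector s arises from t by trading a copies of w inside t for a copies of q
   (mu_{h,f}: q = h + f, w = e_h + e_f, a = t(h); mu_h: q = t(h) h,
   w = t(h) e_h, a = 1).  A vertex t is the unique maximizer on T(G, g0) of
   some functional c.  Replacing every copy of q by w (the map subst) keeps
   T(G, g0) and raises c by p(q) times gain = c(w) - c(q); comparing t with s
   gives gain > 0 and t(q) = 0.  The tilted functional c + gain e_q evaluates p
   as c evaluates subst p, so its maximizers on T(G, g0) are the p with
   subst p = t, which are exactly the lattice points of the segment [t, s]:
   hence [t, s] is an edge.  Subtracting e_h, a coordinate that vanishes on
   this segment only at s, leaves s as the unique maximizer: s is a vertex.
   The degenerate case t(h) h = h of mu_h cannot occur at a vertex, since t
   would then be the midpoint of two other points of T(G, g0). *)

From HB Require Import structures.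
From mathcomp Require Import all_boot all_order all_algebra.
From mathcomp Require Import ring lra zify.
Set Implicit Arguments. Unset Strict Implicit. Unset Printing Implicit Defensive.
Import Order.TTheory GRing.Theory Num.Theory.
Local Open Scope ring_scope.

Section LinearFunctionalsOnP.
Variables (G : finZmodType) (R : realFieldType) (g0 : G).
Implicit Types (c x : Gp G -> R) (p s t : ivec G) (M : R).

Lemma inP_emb p x : inT g0 p -> (forall g, x g = emb R p g) -> inP g0 x.
Proof.
move=> Tp xp; exists [:: (p, 1)]; split => /=; rewrite ?Tp ?ler01 ?big_seq1 //.
by move=> g; rewrite big_seq1 mul1r xp.
Qed.

Lemma dot_ext c x y : (forall g, x g = y g) -> dot c x = dot c y.
Proof. by move=> xy; apply: eq_bigr => g _; rewrite xy. Qed.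

Lemma dot_comb c (s : seq (ivec G * R)) x :
  (forall g, x g = \sum_(e <- s) e.2 * (e.1 g)%:R) ->
  dot c x = \sum_(e <- s) e.2 * dot c (emb R e.1).
Proof.
move=> xE; rewrite /dot.
under eq_bigr do rewrite xE mulr_sumr.
rewrite exchange_big /=; apply: eq_bigr => e _; rewrite mulr_sumr.
by apply: eq_bigr => g _; rewrite /emb mulrCA.
Qed.

Lemma dot_inP_le c M x :
  (forall p, inT g0 p -> dot c (emb R p) <= M) -> inP g0 x -> dot c x <= M.
Proof.
move=> bound [s [Ts s_ge0 s_sum xE]]; rewrite (dot_comb c xE).
apply: (@le_trans _ _ (\sum_(e <- s) e.2 * M)); last first.
  by rewrite -mulr_suml s_sum mul1r.
rewrite !big_seq; apply: ler_sum => e es.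
by apply: ler_wpM2l; [exact: (allP s_ge0) | apply/bound/(allP Ts)].
Qed.

Lemma maximizing_comb c M (s : seq (ivec G * R)) x :
  (forall p, inT g0 p -> dot c (emb R p) <= M) ->
  all (fun e => inT g0 e.1) s -> all (fun e => 0 <= e.2) s ->
  \sum_(e <- s) e.2 = 1 -> (forall g, x g = \sum_(e <- s) e.2 * (e.1 g)%:R) ->
  M <= dot c x -> forall e, e \in s -> e.2 = 0 \/ dot c (emb R e.1) = M.
Proof.
move=> bound Ts s_ge0 s_sum xE Mx.
pose gap e := e.2 * (M - dot c (emb R e.1)).
have gap_ge0 e : e \in s -> 0 <= gap e.
  move=> es; rewrite mulr_ge0 ?(allP s_ge0) // subr_ge0.
  exact/bound/(allP Ts).
have gap_sum : \sum_(e <- s) gap e = M - dot c x.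
  rewrite (dot_comb c xE) -(mul1r M) -s_sum mulr_suml -sumrB.
  by apply: eq_bigr => e _; rewrite /gap mulrBr.
have gaps0 : \sum_(e <- s) gap e = 0.
  apply/eqP; rewrite eq_le {1}gap_sum subr_le0 Mx /= big_seq.
  by apply: sumr_ge0 => e; apply: gap_ge0.
move=> e es; have /eqP : gap e = 0.
  move/eqP: gaps0; rewrite big_seq psumr_eq0; last exact: gap_ge0.
  by move=> /allP /(_ e es); rewrite es => /eqP.
by rewrite mulf_eq0 subr_eq0 => /orP[/eqP|/eqP]; [left | right].
Qed.

Lemma vertex_of_unique_maximizer c M s :
  inT g0 s -> dot c (emb R s) = M ->
  (forall p, inT g0 p -> dot c (emb R p) <= M) ->
  (forall p, inT g0 p -> dot c (emb R p) = M -> forall g, p g = s g) ->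
  is_vertex g0 (emb R s).
Proof.
move=> Ts cs bound unique; exists c => x; split.
  case=> [[q [Tq q_ge0 q_sum xE]] xmax].
  have Mx : M <= dot c x by rewrite -cs; apply/xmax/(inP_emb Ts).
  have qmax := maximizing_comb bound Tq q_ge0 q_sum xE Mx.
  move=> g; rewrite xE /emb -[(s g)%:R]mul1r -q_sum mulr_suml !big_seq.
  apply: eq_bigr => e qe; case: (qmax e qe) => [-> | ce]; first by rewrite !mul0r.
  by rewrite (unique _ (allP Tq e qe) ce).
move=> xs; split; last first.
  by move=> y Py; rewrite (dot_ext c xs) cs; exact: dot_inP_le Py.
exact: inP_emb xs.
Qed.

Lemma adjacent_of_segment_maximizers c M t s (J : ivec G -> R) :
  inT g0 t -> inT g0 s -> (exists g, t g != s g) ->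
  (forall p, inT g0 p -> dot c (emb R p) <= M) ->
  dot c (emb R t) = M -> dot c (emb R s) = M ->
  (forall p, inT g0 p -> dot c (emb R p) = M ->
     [/\ 0 <= J p, J p <= 1 &
         forall g, (p g)%:R = (1 - J p) * (t g)%:R + J p * (s g)%:R]) ->
  adjacent g0 (emb R t) (emb R s).
Proof.
move=> Tt Ts [g1 tsg1] bound ct cs segment; split.
  by exists g1; rewrite /emb eqr_nat.
exists c => x; split.
  case=> [[q [Tq q_ge0 q_sum xE]] xmax].
  have Mx : M <= dot c x by rewrite -ct; apply/xmax/(inP_emb Tt).
  have qmax := maximizing_comb bound Tq q_ge0 q_sum xE Mx.
  pose Jx := \sum_(e <- q) e.2 * J e.1.
  have termE e : e \in q -> [/\ 0 <= e.2 * J e.1, e.2 * J e.1 <= e.2 & forall g,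
      e.2 * (e.1 g)%:R = e.2 * ((1 - J e.1) * (t g)%:R + J e.1 * (s g)%:R)].
    move=> qe; case: (qmax e qe) => [-> | ce]; first by split=> [||g]; rewrite !mul0r.
    have [J0 J1 eE] := segment _ (allP Tq e qe) ce.
    have e2 := allP q_ge0 e qe.
    by split; [rewrite mulr_ge0 | rewrite -[X in _ <= X]mulr1 ler_wpM2l | move=> g; rewrite eE].
  have Jx0 : 0 <= Jx by rewrite /Jx big_seq sumr_ge0 // => e /termE[].
  have Jx1 : Jx <= 1.
    by rewrite -q_sum /Jx !big_seq; apply: ler_sum => e /termE[].
  exists (1 - Jx); split; [lra | lra | move=> g].
  have -> : x g = \sum_(e <- q) e.2 * ((1 - J e.1) * (t g)%:R + J e.1 * (s g)%:R).
    by rewrite xE !big_seq; apply: eq_bigr => e /termE[_ _ ->].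
  have weight_t : \sum_(e <- q) e.2 * (1 - J e.1) = 1 - Jx.
    rewrite /Jx -[in RHS]q_sum -sumrB.
    by apply: eq_bigr => e _; rewrite mulrBr mulr1.
  under eq_bigr do rewrite mulrDr !mulrA.
  rewrite big_split /= -!mulr_suml weight_t -/Jx /emb; ring.
case=> lam [lam0 lam1 xE].
have xE' g : x g = \sum_(e <- [:: (t, lam); (s, 1 - lam)]) e.2 * (e.1 g)%:R.
  by rewrite big_cons big_seq1 xE.
split.
  exists [:: (t, lam); (s, 1 - lam)]; split => //=.
  - by rewrite Tt Ts.
  - by rewrite lam0 subr_ge0 lam1.
  - by rewrite big_cons big_seq1 /= addrC subrK.
move=> y Py; rewrite (dot_comb c xE') big_cons big_seq1 /= ct cs.
rewrite -mulrDl addrC subrK mul1r; exact: dot_inP_le bound Py.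
Qed.

Definition exposes c t :=
  forall p, inT g0 p -> p != t -> dot c (emb R p) < dot c (emb R t).

Lemma vertex_exposed t : is_vertex g0 (emb R t) -> exists c, exposes c t.
Proof.
case=> c vertex_face; exists c => p Tp pt.
have [_ tmax] := (vertex_face (emb R t)).2 (fun g => erefl).
have cp : dot c (emb R p) <= dot c (emb R t) by apply/tmax/(inP_emb Tp).
rewrite lt_neqAle cp andbT; apply/eqP => cpt.
have pface : on_face g0 c (emb R p).
  by split=> [|y Py]; [exact: inP_emb Tp _ | rewrite cpt; apply: tmax].
move/eqP: pt; apply; apply/ffunP => g.
by have /eqP := (vertex_face _).1 pface g; rewrite /emb eqr_nat => /eqP.
Qed.

Lemma exposed_not_midpoint c t p1 p2 :
  exposes c t -> inT g0 p1 -> inT g0 p2 ->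
  (forall g, p1 g + p2 g = 2 * t g)%N -> p1 = t.
Proof.
move=> ct Tp1 Tp2 mid; apply/eqP/negPn/negP => p1t.
have p2t : p2 != t.
  apply/eqP => p2t; move/eqP: p1t; apply; apply/ffunP => g.
  by move: (mid g); rewrite p2t mul2n -addnn => /addIn.
have := ct _ Tp1 p1t; have := ct _ Tp2 p2t.
have -> : dot c (emb R p2) = 2 * dot c (emb R t) - dot c (emb R p1).
  rewrite /dot mulr_sumr -sumrB; apply: eq_bigr => g _.
  rewrite /emb mulrCA -mulrBr -natrM -(mid g) natrD; ring.
lra.
Qed.
End LinearFunctionalsOnP.

Section WeightsAndFunctionals.
Variables (G : finZmodType) (R : realFieldType).
Implicit Types (c : Gp G -> R) (p : ivec G).

Definition weight (w : Gp G -> nat) : G := \sum_(g : Gp G) val g *+ w g.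

Definition unit_vec (h : Gp G) (k : nat) : Gp G -> nat :=
  fun g => if g == h then k else 0%N.

Definition realize (w : Gp G -> nat) : Gp G -> R := fun g => (w g)%:R.

Lemma weight_unit h k : weight (unit_vec h k) = val h *+ k.
Proof.
rewrite /weight (bigD1 h) //= /unit_vec eqxx big1 ?addr0 // => g /negbTE ->.
by rewrite mulr0n.
Qed.

Lemma weight_ffun (f : Gp G -> nat) : weight [ffun g => f g] = weight f.
Proof. by apply: eq_bigr => g _; rewrite ffunE. Qed.

Lemma weightD (w1 w2 : Gp G -> nat) :
  weight (fun g => w1 g + w2 g)%N = weight w1 + weight w2.
Proof. by rewrite /weight -big_split; apply: eq_bigr => g _; rewrite mulrnDr. Qed.

Lemma weight_scale k (w : Gp G -> nat) :
  weight (fun g => k * w g)%N = weight w *+ k.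
Proof.
by rewrite /weight -sumrMnl; apply: eq_bigr => g _; rewrite mulnC mulrnA.
Qed.

Lemma dot_unit c h k : dot c (realize (unit_vec h k)) = c h * k%:R.
Proof.
rewrite /dot (bigD1 h) //= /realize /unit_vec eqxx big1 ?addr0 // => g /negbTE ->.
by rewrite mulr0.
Qed.

Lemma dot_realizeD c (u v : Gp G -> nat) :
  dot c (realize (fun g => u g + v g)%N) = dot c (realize u) + dot c (realize v).
Proof.
by rewrite /dot -big_split; apply: eq_bigr => g _; rewrite /realize natrD mulrDr.
Qed.

Lemma dot_realizeM c k (u : Gp G -> nat) :
  dot c (realize (fun g => k * u g)%N) = k%:R * dot c (realize u).
Proof.
by rewrite /dot mulr_sumr; apply: eq_bigr => g _; rewrite /realize natrM mulrCA.
Qed.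

Lemma dot_add_unit c h (k : R) (x : Gp G -> R) :
  dot (fun g => c g + (if g == h then k else 0)) x = dot c x + k * x h.
Proof.
rewrite /dot; under eq_bigr do rewrite mulrDl.
rewrite big_split /=; congr (_ + _).
by rewrite (bigD1 h) //= eqxx big1 ?addr0 // => g /negbTE ->; rewrite mul0r.
Qed.

Lemma inT_transfer g0 p p' :
  weight p' = weight p -> ([exists g, p g != 0%N] -> [exists g, p' g != 0%N]) ->
  inT g0 p -> inT g0 p'.
Proof.
rewrite /inT => weight_eq nz /andP[weight_p nz_p].
rewrite -/(weight p') weight_eq weight_p /=.
by apply/implyP => /(implyP nz_p); exact: nz.
Qed.
End WeightsAndFunctionals.

Section Substitution.
Variables (G : finZmodType) (R : realFieldType).
Variables (q : Gp G) (w : Gp G -> nat).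
Hypotheses (w_q : w q = 0%N) (weight_w : weight w = val q).
Implicit Types (c : Gp G -> R) (p s t : ivec G).

(* p' arises from p by replacing k copies of q with k copies of w,
   i.e. p + k w = p' + k e_q. *)
Definition exchanged (k : nat) p p' :=
  forall g, (p g + k * w g = p' g + unit_vec q k g)%N.

Definition gain c : R := dot c (realize R w) - c q.

Lemma exchanged_weight k p p' : exchanged k p p' -> weight p' = weight p.
Proof.
move=> pp'; have : weight (fun g => p g + k * w g)%N =
                   weight (fun g => p' g + unit_vec q k g)%N.
  by apply: eq_bigr => g _; rewrite pp'.
by rewrite !weightD weight_unit weight_scale weight_w => /addIr.
Qed.

Lemma exchanged_dot c k p p' :
  exchanged k p p' -> dot c (emb R p') = dot c (emb R p) + k%:R * gain c.
Proof.
move=> pp'; have : dot c (realize R (fun g => p g + k * w g)%N) =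
                   dot c (realize R (fun g => p' g + unit_vec q k g)%N).
  by apply: eq_bigr => g _; rewrite /realize pp'.
rewrite !dot_realizeD dot_realizeM dot_unit /gain /realize /emb => E.
by rewrite mulrBr addrA E; ring.
Qed.

Definition subst p : ivec G :=
  [ffun g => if g == q then 0%N else (p g + p q * w g)%N].

Lemma subst_exchanged p : exchanged (p q) p (subst p).
Proof.
move=> g; rewrite /subst /unit_vec ffunE; case: eqP => [-> | _]; last by rewrite addn0.
by rewrite w_q muln0 addn0 add0n.
Qed.

Lemma exchanged_subst k p p' : exchanged k p p' -> p' q = 0%N -> subst p = p'.
Proof.
move=> pp' p'q; have := pp' q.
rewrite /unit_vec eqxx w_q p'q muln0 addn0 add0n => pq; subst k.
apply/ffunP => g; rewrite ffunE; case: eqP => [-> // | /eqP gq].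
by rewrite pp' /unit_vec (negbTE gq) addn0.
Qed.

Lemma w_nonzero : exists h, (0 < w h)%N.
Proof.
have [h wh | w0] := pickP (fun h => 0 < w h)%N; first by exists h.
move: (valP q); rewrite -weight_w /weight big1 ?eqxx // => g _.
by have /negbT := w0 g; rewrite lt0n negbK => /eqP ->.
Qed.

Lemma inT_subst g0 p : inT g0 p -> inT g0 (subst p).
Proof.
apply: inT_transfer; first exact: exchanged_weight (subst_exchanged p).
move=> /existsP[g pg]; apply/existsP; case: (posnP (p q)) => [pq0 | pq_pos].
  exists g; rewrite ffunE pq0 mul0n addn0; case: (g =P q) => [gq | //].
  by move: pg; rewrite gq pq0.
have [h wh] := w_nonzero; exists h.
rewrite ffunE; case: (h =P q) => [hq | _]; first by move: wh; rewrite hq w_q.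
by rewrite -lt0n addn_gt0 muln_gt0 pq_pos wh orbT.
Qed.

(* c tilted by its gain at q evaluates p as c evaluates subst p. *)
Definition tilt c : Gp G -> R := fun g => c g + (if g == q then gain c else 0).

Lemma dot_tilt c p : dot (tilt c) (emb R p) = dot c (emb R (subst p)).
Proof. by rewrite dot_add_unit (exchanged_dot c (subst_exchanged p)) mulrC. Qed.
End Substitution.

Section ExchangeMove.
Variables (G : finZmodType) (R : realFieldType) (g0 : G).
Variables (q : Gp G) (w : Gp G -> nat).
Hypotheses (w_q : w q = 0%N) (weight_w : weight w = val q).
Variables (c : Gp G -> R) (t s : ivec G) (a : nat) (h : Gp G).
Hypotheses (t_in : inT g0 t) (c_t : exposes g0 c t).
Hypotheses (a_pos : (0 < a)%N) (w_h : (0 < w h)%N) (t_h : t h = (a * w h)%N).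
Hypothesis s_t : exchanged q w a s t.

Lemma s_q : s q = (t q + a)%N.
Proof. by have := s_t q; rewrite w_q muln0 addn0 /unit_vec eqxx. Qed.

Lemma s_in : inT g0 s.
Proof.
apply: inT_transfer t_in; first exact/esym/(exchanged_weight weight_w s_t).
by move=> _; apply/existsP; exists q; rewrite s_q -lt0n addn_gt0 a_pos orbT.
Qed.

Lemma gain_pos : 0 < gain q w c.
Proof.
have s_ne_t : s != t by apply/eqP => st; move: s_q; rewrite st; lia.
have := c_t s_in s_ne_t; rewrite (exchanged_dot c s_t) ltrDl.
by rewrite pmulr_rgt0 // ltr0n.
Qed.

(* t contains no copy of q: otherwise subst t would beat t. *)
Lemma t_q : t q = 0%N.
Proof.
case: (eqVneq (subst q w t) t) => [tt | tt]; first by rewrite -tt ffunE eqxx.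
have := c_t (inT_subst w_q weight_w t_in) tt.
rewrite (exchanged_dot c (subst_exchanged w_q t)) -[X in _ < X]addr0 ltrD2l.
by rewrite pmulr_llt0 ?gain_pos // ltrn0.
Qed.

Lemma subst_s : subst q w s = t.
Proof. by apply: (exchanged_subst w_q s_t); exact: t_q. Qed.

Lemma tilt_le p : inT g0 p -> dot (tilt q w c) (emb R p) <= dot c (emb R t).
Proof.
move=> Tp; rewrite (dot_tilt w_q); case: (eqVneq (subst q w p) t) => [-> // | pt].
exact/ltW/c_t/pt/inT_subst.
Qed.

Lemma tilt_max p : inT g0 p -> dot (tilt q w c) (emb R p) = dot c (emb R t) ->
  exchanged q w (p q) p t.
Proof.
move=> Tp; rewrite (dot_tilt w_q); case: (eqVneq (subst q w p) t) => [<- _ | pt].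
  exact: subst_exchanged.
by have := c_t (inT_subst w_q weight_w Tp) pt => /[swap] ->; rewrite ltxx.
Qed.

Lemma h_ne_q : h != q.
Proof. by apply/eqP => hq; move: w_h; rewrite hq w_q. Qed.

Lemma exchange_segment k p : exchanged q w k p t ->
  (k <= a)%N /\ forall g,
    (p g)%:R = (1 - k%:R / a%:R) * (t g)%:R + k%:R / a%:R * (s g)%:R :> R.
Proof.
move=> p_t; split.
  have := p_t h; rewrite /unit_vec (negbTE h_ne_q) addn0 t_h => pth.
  by rewrite -(leq_pmul2r w_h) -pth leq_addl.
have a_neq0 : a%:R != 0 :> R by rewrite pnatr_eq0 -lt0n.
move=> g; have := p_t g; have := s_t g; rewrite /unit_vec.
move=> /(congr1 (fun n => n%:R : R)) sE /(congr1 (fun n => n%:R : R)) pE.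
rewrite !natrD !natrM in sE pE.
have -> : (p g)%:R = (t g)%:R + (if g == q then k else 0)%:R - k%:R * (w g)%:R :> R.
  by rewrite -pE addrK.
have -> : (s g)%:R = (t g)%:R + (if g == q then a else 0)%:R - a%:R * (w g)%:R :> R.
  by rewrite -sE addrK.
by case: eqP => _; field.
Qed.

Lemma exchange_adjacent : adjacent g0 (emb R t) (emb R s).
Proof.
apply: (adjacent_of_segment_maximizers (c := tilt q w c)
          (J := fun p => (p q)%:R / a%:R)) t_in s_in _ tilt_le _ _ _.
- by exists q; rewrite s_q t_q add0n eq_sym -lt0n.
- by rewrite /tilt dot_add_unit /emb t_q mulr0 addr0.
- by rewrite (dot_tilt w_q) subst_s.
move=> p Tp /(tilt_max Tp) /exchange_segment[pq_a segment]; split => //.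
- by rewrite divr_ge0.
- by rewrite ler_pdivrMr ?ltr0n // mul1r ler_nat.
Qed.

(* Penalizing the coordinate h, which is maximal at t and zero at s on the
   edge, leaves s as the unique maximizer. *)
Lemma exchange_vertex : is_vertex g0 (emb R s).
Proof.
pose c' g := tilt q w c g + (if g == h then -1 else 0).
have s_h : s h = 0%N.
  by have := s_t h; rewrite /unit_vec (negbTE h_ne_q) addn0 t_h; lia.
have dot_c' p : dot c' (emb R p) = dot (tilt q w c) (emb R p) - (p h)%:R.
  by rewrite /c' dot_add_unit mulN1r.
apply: (vertex_of_unique_maximizer (c := c')) s_in _ _ _.
- by rewrite dot_c' (dot_tilt w_q) subst_s s_h subr0.
- by move=> p Tp; rewrite dot_c' lerBlDr (le_trans (tilt_le Tp)) // lerDl.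
move=> p Tp; rewrite dot_c' => c'p.
have ph_ge0 := ler0n R (p h); have tilt_p_le := tilt_le Tp.
have tilt_p : dot (tilt q w c) (emb R p) = dot c (emb R t) by lra.
have /eqP : (p h)%:R = 0 :> R by lra.
rewrite pnatr_eq0 => /eqP ph0.
have p_t := tilt_max Tp tilt_p.
have pq_a : p q = a.
  have := p_t h; rewrite ph0 /unit_vec (negbTE h_ne_q) addn0 add0n t_h.
  by move/eqP; rewrite eqn_pmul2r // => /eqP.
move=> g; have := p_t g; have := s_t g; rewrite pq_a => <-; exact: addIn.
Qed.
End ExchangeMove.

Section MuOperations.
Variables (G : finZmodType) (R : realFieldType) (g0 : G).
Variables (c : Gp G -> R) (t : ivec G).
Hypotheses (t_in : inT g0 t) (c_t : exposes g0 c t).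

Lemma mu2_move h f : mu2_applicable t h f ->
  is_vertex g0 (emb R (mu2 t h f)) /\ adjacent g0 (emb R t) (emb R (mu2 t h f)).
Proof.
case/and5P=> th_pos _ h_ne_f th_le_tf hf_nz; rewrite /supp in th_pos.
pose q : Gp G := exist _ (val h + val f) hf_nz.
pose w g := (unit_vec h 1 g + unit_vec f 1 g)%N.
have val_q : val q = val h + val f by [].
have h_ne_q : (h == q) = false.
  apply/negbTE/eqP => /(congr1 val); rewrite val_q => hq; move: (valP f).
  by rewrite -(addrI _ (etrans (addr0 _) hq)) eqxx.
have f_ne_q : (f == q) = false.
  apply/negbTE/eqP => /(congr1 val); rewrite val_q => fq; move: (valP h).
  by rewrite -(addIr _ (etrans (add0r _) fq)) eqxx.
have w_q : w q = 0%N by rewrite /w /unit_vec eq_sym h_ne_q eq_sym f_ne_q.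
have weight_w : weight w = val q by rewrite weightD !weight_unit.
have w_h : w h = 1%N by rewrite /w /unit_vec eqxx (negbTE h_ne_f).
have mu2_t : exchanged q w (t h) (mu2 t h f) t.
  move=> g; rewrite ffunE /w /unit_vec -val_q val_eqE.
  case: (eqVneq g h) => [-> | g_ne_h]; first by rewrite h_ne_q (negbTE h_ne_f); lia.
  case: (eqVneq g f) => [-> | g_ne_f]; first by rewrite f_ne_q; lia.
  by case: (g == q); lia.
have th_E : t h = (t h * w h)%N by rewrite w_h muln1.
have wh_pos : (0 < w h)%N by rewrite w_h.
split; [exact: (exchange_vertex w_q weight_w t_in c_t th_pos wh_pos th_E mu2_t)
       |exact: (exchange_adjacent w_q weight_w t_in c_t th_pos wh_pos th_E mu2_t)].
Qed.

(* An exposed point t never satisfies t(h) h = h with t(h) > 1: it would be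
   the midpoint of t + (t(h) - 1) e_h and t - (t(h) - 1) e_h, both in T. *)
Lemma exposed_mult_ne h : (1 < t h)%N -> val h *+ t h != val h.
Proof.
move=> th_gt1; apply/eqP => th_h.
have null : val h *+ (t h - 1) = 0.
  by apply: (addIr (val h)); rewrite add0r -mulrSr subn1 prednK ?th_h // ltnW.
pose p1 : ivec G := [ffun g => t g + unit_vec h (t h - 1) g]%N.
pose p2 : ivec G := [ffun g => if g == h then 1 else t g]%N.
have p2_split g : t g = (p2 g + unit_vec h (t h - 1) g)%N.
  by rewrite ffunE /unit_vec; case: (g =P h) => [-> | _]; lia.
have Tp1 : inT g0 p1.
  apply: inT_transfer t_in; first by rewrite weight_ffun weightD weight_unit null addr0.
  by move=> _; apply/existsP; exists h; rewrite ffunE /unit_vec eqxx; lia.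
have Tp2 : inT g0 p2.
  apply: inT_transfer t_in; last by move=> _; apply/existsP; exists h; rewrite ffunE eqxx.
  have -> : weight t = weight (fun g => p2 g + unit_vec h (t h - 1) g)%N.
    by apply: eq_bigr => g _; rewrite -p2_split.
  by rewrite weightD weight_unit null addr0.
have mid g : (p1 g + p2 g = 2 * t g)%N.
  by rewrite [in RHS]p2_split !ffunE /unit_vec; case: (g =P h) => [-> | _]; lia.
have /ffunP/(_ h) := exposed_not_midpoint c_t Tp1 Tp2 mid.
rewrite ffunE /unit_vec eqxx => /eqP; rewrite -{3}[t h]addn0 eqn_add2l subn_eq0.
by rewrite leqNgt th_gt1.
Qed.

Lemma mu1_move h : mu1_applicable t h ->
  is_vertex g0 (emb R (mu1 t h)) /\ adjacent g0 (emb R t) (emb R (mu1 t h)).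
Proof.
case/and3P=> th_pos th_gt1 q_nz; rewrite /supp in th_pos.
pose q : Gp G := exist _ (val h *+ t h) q_nz.
have val_q : val q = val h *+ t h by [].
have h_ne_q : (h == q) = false.
  apply/negbTE/eqP => /(congr1 val); rewrite val_q => /esym/eqP.
  exact/negP/exposed_mult_ne.
pose w := unit_vec h (t h).
have w_q : w q = 0%N by rewrite /w /unit_vec eq_sym h_ne_q.
have weight_w : weight w = val q by rewrite weight_unit.
have wh_pos : (0 < w h)%N by rewrite /w /unit_vec eqxx.
have th_E : t h = (1 * w h)%N by rewrite /w /unit_vec eqxx mul1n.
have mu1_t : exchanged q w 1 (mu1 t h) t.
  move=> g; rewrite ffunE /w /unit_vec -val_q val_eqE mul1n.
  case: (eqVneq g h) => [-> | g_ne_h]; first by rewrite h_ne_q; lia.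
  by case: (g == q); lia.
split; [exact: (exchange_vertex w_q weight_w t_in c_t (ltn0Sn 0) wh_pos th_E mu1_t)
       |exact: (exchange_adjacent w_q weight_w t_in c_t (ltn0Sn 0) wh_pos th_E mu1_t)].
Qed.
End MuOperations.

Theorem theorem3 (G : finZmodType) (R : realFieldType) (g0 : G) (t : ivec G) :
  inT g0 t -> is_vertex g0 (emb R t) ->
  (forall h f : Gp G, mu2_applicable t h f ->
     is_vertex g0 (emb R (mu2 t h f)) /\ adjacent g0 (emb R t) (emb R (mu2 t h f))) /\
  (forall h : Gp G, mu1_applicable t h ->
     is_vertex g0 (emb R (mu1 t h)) /\ adjacent g0 (emb R t) (emb R (mu1 t h))).
Proof.
move=> t_in t_vertex; have [c c_t] := vertex_exposed t_vertex.
by split; [exact: (mu2_move t_in c_t) | exact: (mu1_move t_in c_t)].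
Qed.
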